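(* Let $k$ be a field, $A,B$ abelian groups, $R$ an $A$-graded and $S$ a $B$-graded finite-dimensional Frobenius $k$-algebra with forms $\langle-,-\rangle_R$, $\langle-,-\rangle_S$, and $t:A\otimes B\to k^\times$ a bicharacter. Define on $R\otimes^tS$, for homogeneous $r,r'\in R$, $s,s'\in S$, $$\langle r\otimes s,r'\otimes s'\rangle=t(|r'|,|s|)\langle r,r'\rangle_R\langle s,s'\rangle_S,$$ extended bilinearly. Then $\langle-,-\rangle$ makes $R\otimes^tS$ a Frobenius algebra.
   Context: $|r|$ denotes the degree of a homogeneous element. The twisted tensor product $R\otimes^tS$ is the vector space $R\otimes S$ with multiplication $(r\otimes s)(r'\otimes s')=t(|r'|,|s|)\,rr'\otimes ss'$ for homogeneous elements. A Frobenius algebra is a finite-dimensional algebra with a nondegenerate bilinear form satisfying $\langle xy,z\rangle=\langle x,yz\rangle$. *)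

From HB Require Import structures.
From mathcomp Require Import all_boot all_order all_algebra falgebra.
Set Implicit Arguments. Unset Strict Implicit. Unset Printing Implicit Defensive.
Import GRing.Theory.
Local Open Scope ring_scope.


Definition grading (k : fieldType) (A : zmodType) (R : falgType k)
    (V : A -> {vspace R}) : Prop :=
  exists supp : seq A,
    [/\ uniq supp,
        (forall a, a \notin supp -> V a = 0%VS),
        (\sum_(a <- supp) V a)%VS = fullv%VS,
        directv (\sum_(a <- supp) V a)%VS
      & (forall a b (x y : R), x \in V a -> y \in V b -> (x * y)%R \in V (a + b)%R)].

(* A bicharacter A x B -> k^x (equivalently a hom A (x)_Z B -> k^x). *)
Definition bicharacter (k : fieldType) (A B : zmodType) (t : A -> B -> k) : Prop :=
  [/\ (forall a b, t a b != 0),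
      (forall a a' b, t (a + a') b = t a b * t a' b)
    & (forall a b b', t a (b + b') = t a b * t a b')].

Definition bilinear_form (k : fieldType) (V : vectType k) (f : V -> V -> k) : Prop :=
  (forall c x x' y, f (c *: x + x') y = c * f x y + f x' y) /\
  (forall c x y y', f x (c *: y + y') = c * f x y + f x y').

Definition frobenius_form (k : fieldType) (L : falgType k) (f : L -> L -> k) : Prop :=
  [/\ bilinear_form f,
      (forall x, (forall y, f x y = 0) -> x = 0),
      (forall y, (forall x, f x y = 0) -> y = 0)
    & (forall x y z, f (x * y) z = f x (y * z))].

(* iota : R -> S -> T exhibits T as the tensor product R (x)_k S:
   iota is bilinear, its image spans T and dim T = dim R * dim S. *)
Definition is_tensor_product (k : fieldType) (R S T : vectType k)
    (iota : R -> S -> T) : Prop :=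
  [/\ (forall c r r' s, iota (c *: r + r') s = c *: iota r s + iota r' s),
      (forall c r s s', iota r (c *: s + s') = c *: iota r s + iota r s'),
      (forall x : T, exists rs : seq (R * S), x = \sum_(p <- rs) iota p.1 p.2)
    & \dim {: T} = (\dim {: R} * \dim {: S})%N].

From HB Require Import structures.
From mathcomp Require Import all_boot all_order all_algebra falgebra.
From mathcomp Require Import ring.
Import GRing.Theory.
Local Open Scope ring_scope.
Set Implicit Arguments. Unset Strict Implicit.

(* Associativity <xy, z> = <x, yz> is checked on homogeneous pure tensors,
   where it reduces to associativity of the two factor forms together with
   t(a'+a'', b) t(a'', b') = t(a', b) t(a'', b + b'); trilinearity extends it
   to all of R (x)^t S.  For nondegeneracy write x in the left radical as
   x = sum_j x_j (x) e_j over a homogeneous basis (e_j) of S.  Pairing with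
   r' (x) s' for homogeneous r' puts sum_j t(|r'|, |e_j|) <x_j, r'> e_j in the
   left radical of S, so it vanishes; as t takes nonzero values, every x_j lies
   in the left radical of R.  The right radical is the left radical of the
   transposed form on S (x)^t' R, where t'(b, a) = t(a, b). *)

Definition left_nondegenerate (k : fieldType) (V : zmodType) (f : V -> V -> k) :=
  forall x, (forall y, f x y = 0) -> x = 0.

Section LinearFor.

Variables (k : fieldType) (U : lmodType k) (V : zmodType).
Variables (s : GRing.Scale.law k V) (f : U -> V).
Hypothesis f_lin : linear_for s f.

Let fL : {linear U -> V | s} := HB.pack f (GRing.isLinear.Build k U V s f f_lin).

Lemma linear_for0 : f 0 = 0. Proof. exact: (linear0 fL). Qed.

Lemma linear_forZ c u : f (c *: u) = s c (f u). Proof. exact: (linearZ_LR fL). Qed.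

Lemma linear_for_sum I (r : seq I) (F : I -> U) :
  f (\sum_(i <- r) F i) = \sum_(i <- r) f (F i).
Proof. exact: (linear_sum fL). Qed.

End LinearFor.

Lemma bilinear_form_scalar (k : fieldType) (V : vectType k) (f : V -> V -> k) :
  bilinear_form f -> (forall y, scalar (f^~ y)) /\ (forall x, scalar (f x)).
Proof. by case=> fl fr; split=> [y c x x' | x c y y']; [apply: fl | apply: fr]. Qed.

Lemma directv_homogeneous_basis (k : fieldType) (I : eqType) (vT : vectType k)
    (V : I -> {vspace vT}) (s : seq I) :
    directv (\sum_(i <- s) V i) ->
  exists2 P : seq (I * vT), (forall p, p \in P -> p.2 \in V p.1)
                          & basis_of (\sum_(i <- s) V i) (map snd P).
Proof.
elim: s => [|a s IH] dxs.
  by exists [::] => //; rewrite big_nil; apply: nil_basis.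
have dxas : directv (V a + \sum_(b <- s) V b).
  by move: dxs; rewrite !directvE /= !big_cons.
have := dxas; rewrite directv_addE => /and3P[_ dxs' _].
have [P homP basisP] := IH dxs'.
exists ([seq (a, v) | v <- vbasis (V a)] ++ P).
  by move=> p; rewrite mem_cat => /orP[/mapP[v /vbasis_mem ? ->] | /homP].
rewrite big_cons map_cat -map_comp map_id; apply: cat_basis (vbasisP _) basisP.
by move: dxas dxs'; rewrite !directvE /= => /eqP -> /eqP ->.
Qed.

Section Grading.

Variables (k : fieldType) (A : zmodType) (R : falgType k) (V : A -> {vspace R}).

Hypothesis gV : grading V.

Lemma grading_mul a b x y : x \in V a -> y \in V b -> x * y \in V (a + b).
Proof. by case: gV => ? [_ _ _ _]; apply. Qed.

Lemma grading_homogeneous_basis : exists n (e : 'I_n -> R) (d : 'I_n -> A),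
  [/\ forall i, e i \in V (d i),
      forall c : 'I_n -> k, \sum_i c i *: e i = 0 -> forall i, c i = 0
    & forall r, exists c : 'I_n -> k, r = \sum_i c i *: e i].
Proof.
case: gV => supp [_ _ sum_full dx _].
have [P homP] := directv_homogeneous_basis dx; rewrite sum_full => basisP.
pose X := in_tuple (map snd P).
exists (size X), (fun i => X`_i), (fun i => (nth (0, 0) P i).1); split.
- move=> i; have iP : (i < size P)%N by rewrite -(size_map snd) ltn_ord.
  by rewrite (nth_map (0, 0)) //; apply/homP/mem_nth.
- by have /(@freeP _ _ _ X) := basis_free basisP.
- move=> r; exists (coord X ^~ r); exact: coord_basis (memvf r).
Qed.

Lemma grading_ind (P : R -> Prop) :
  P 0 -> (forall c x y, P x -> P y -> P (c *: x + y)) ->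
  (forall a x, x \in V a -> P x) -> forall x, P x.
Proof.
move=> P0 PC Phom x; case: gV => supp [_ _ sum_full _ _].
move: (memvf x); rewrite -sum_full {sum_full}.
elim: supp x => [|a s IH] x; rewrite ?big_nil ?big_cons.
  by rewrite memv0 => /eqP ->.
by case/memv_addP=> u /Phom Pu [v /IH Pv ->]; rewrite -[u]scale1r; apply: PC.
Qed.

End Grading.

Section PureTensors.

Variables (k : fieldType) (R S : falgType k) (T : vectType k) (iota : R -> S -> T).
Hypotheses (iota_linl : forall s, linear (iota^~ s))
           (iota_linr : forall r, linear (iota r)).
Hypothesis iota_span : forall x, exists rs : seq (R * S), x = \sum_(p <- rs) iota p.1 p.2.

Lemma tensor_decomposition n (e : 'I_n -> S) :
    (forall s, exists c : 'I_n -> k, s = \sum_j c j *: e j) ->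
  forall x, exists xs : 'I_n -> R, x = \sum_j iota (xs j) (e j).
Proof.
move=> e_span x; have [rs ->] := iota_span x; elim: rs => [|[r s] rs [xs IH]].
  exists (fun=> 0); rewrite big_nil big1 // => j _; exact: linear_for0 (iota_linl _).
have [c ->] := e_span s; exists (fun j => c j *: r + xs j).
rewrite big_cons IH (linear_for_sum (iota_linr r)) -big_split; apply: eq_bigr => j _.
by rewrite (linear_forZ (iota_linr r)) iota_linl.
Qed.

Lemma tensor_ind (A B : zmodType) (VR : A -> {vspace R}) (VS : B -> {vspace S})
    (P : T -> Prop) :
  grading VR -> grading VS -> P 0 -> (forall c x y, P x -> P y -> P (c *: x + y)) ->
  (forall a b r s, r \in VR a -> s \in VS b -> P (iota r s)) -> forall x, P x.
Proof.
move=> gR gS P0 PC Phom.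
have Ppure r s : P (iota r s).
  move: r s; apply: (grading_ind gR) => [s|c r r' Pr Pr' s|a r hr].
  - by rewrite (linear_for0 (iota_linl _)).
  - by rewrite iota_linl; apply: PC.
  apply: (grading_ind gS) => [|c s s' Ps Ps'|b s hs]; last exact: Phom hr hs.
  - by rewrite (linear_for0 (iota_linr _)).
  - by rewrite iota_linr; apply: PC.
move=> x; have [rs ->] := iota_span x; elim: rs => [|p rs IH]; rewrite ?big_nil //.
by rewrite big_cons -[iota _ _]scale1r; apply: PC.
Qed.

End PureTensors.

Section TwistedForm.

Variables (k : fieldType) (A B : zmodType) (R S : falgType k).
Variables (VR : A -> {vspace R}) (VS : B -> {vspace S}).
Variables (formR : R -> R -> k) (formS : S -> S -> k) (t : A -> B -> k).
Variables (T : vectType k) (iota : R -> S -> T) (formT : T -> T -> k).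
Hypotheses (gR : grading VR) (gS : grading VS) (t_neq0 : forall a b, t a b != 0).
Hypotheses (formR_linl : forall y, scalar (formR^~ y))
           (formR_linr : forall x, scalar (formR x)).
Hypotheses (formS_linl : forall y, scalar (formS^~ y))
           (formS_linr : forall x, scalar (formS x)).
Hypotheses (formT_linl : forall y, scalar (formT^~ y))
           (formT_linr : forall x, scalar (formT x)).
Hypotheses (iota_linl : forall s, linear (iota^~ s))
           (iota_linr : forall r, linear (iota r)).
Hypothesis iota_span : forall x, exists rs : seq (R * S), x = \sum_(p <- rs) iota p.1 p.2.
Hypothesis formT_pure : forall a a' b b' r r' s s',
  r \in VR a -> r' \in VR a' -> s \in VS b -> s' \in VS b' ->
  formT (iota r s) (iota r' s') = t a' b * formR r r' * formS s s'.

Lemma twisted_form_iota a' b r r' s s' : r' \in VR a' -> s \in VS b ->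
  formT (iota r s) (iota r' s') = t a' b * formR r r' * formS s s'.
Proof.
move=> hr' hs; elim/(grading_ind gR): r s' => [|c x y Hx Hy|a r hr] s'.
- rewrite (linear_for0 (iota_linl _)) (linear_for0 (formT_linl _)).
  by rewrite (linear_for0 (formR_linl _)) mulr0 mul0r.
- by rewrite iota_linl formT_linl formR_linl Hx Hy; ring.
elim/(grading_ind gS): s' => [|c x y Hx Hy|b' s' hs'].
- rewrite (linear_for0 (iota_linr _)) (linear_for0 (formT_linr _)).
  by rewrite (linear_for0 (formS_linr _)) mulr0.
- by rewrite iota_linr formT_linr formS_linr Hx Hy; ring.
exact: formT_pure hr hr' hs hs'.
Qed.

Lemma twisted_form_left_nondegenerate :
  left_nondegenerate formR -> left_nondegenerate formS -> left_nondegenerate formT.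
Proof.
move=> ndR ndS x x_rad.
have [n [e [d [e_hom e_free e_span]]]] := grading_homogeneous_basis gS.
have [xs x_def] := tensor_decomposition iota_linl iota_linr iota_span e_span x.
suff xs0 j : xs j = 0.
  by rewrite x_def big1 // => j _; rewrite xs0 (linear_for0 (iota_linl _)).
apply: ndR; elim/(grading_ind gR) => [|c y z Hy Hz|a' r' hr'].
- exact: linear_for0 (formR_linr _).
- by rewrite formR_linr Hy Hz mulr0 addr0.
have : \sum_i (t a' (d i) * formR (xs i) r') *: e i = 0.
  apply: ndS => s'; rewrite (linear_for_sum (formS_linl s')).
  rewrite -[RHS](x_rad (iota r' s')) x_def (linear_for_sum (formT_linl _)).
  apply: eq_bigr => i _.
  by rewrite (linear_forZ (formS_linl _)) (twisted_form_iota _ _ hr' (e_hom i)).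
by move/e_free/(_ j)/eqP; rewrite mulf_eq0 (negbTE (t_neq0 _ _)) => /eqP.
Qed.

End TwistedForm.

Section TwistedFormAssoc.

Variables (k : fieldType) (A B : zmodType) (R S : falgType k).
Variables (VR : A -> {vspace R}) (VS : B -> {vspace S}).
Variables (formR : R -> R -> k) (formS : S -> S -> k) (t : A -> B -> k).
Variables (T : falgType k) (iota : R -> S -> T) (formT : T -> T -> k).
Hypotheses (gR : grading VR) (gS : grading VS).
Hypotheses (t_addl : forall a a' b, t (a + a') b = t a b * t a' b)
           (t_addr : forall a b b', t a (b + b') = t a b * t a b').
Hypotheses (formR_assoc : forall x y z, formR (x * y) z = formR x (y * z))
           (formS_assoc : forall x y z, formS (x * y) z = formS x (y * z)).
Hypotheses (formT_linl : forall y, scalar (formT^~ y))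
           (formT_linr : forall x, scalar (formT x)).
Hypotheses (iota_linl : forall s, linear (iota^~ s))
           (iota_linr : forall r, linear (iota r)).
Hypothesis iota_span : forall x, exists rs : seq (R * S), x = \sum_(p <- rs) iota p.1 p.2.
Hypothesis iota_mul : forall a a' b b' r r' s s',
  r \in VR a -> r' \in VR a' -> s \in VS b -> s' \in VS b' ->
  iota r s * iota r' s' = t a' b *: iota (r * r') (s * s').
Hypothesis formT_pure : forall a a' b b' r r' s s',
  r \in VR a -> r' \in VR a' -> s \in VS b -> s' \in VS b' ->
  formT (iota r s) (iota r' s') = t a' b * formR r r' * formS s s'.

Let pure_ind P := tensor_ind iota_linl iota_linr iota_span (P := P) gR gS.

Lemma twisted_form_assoc x y z : formT (x * y) z = formT x (y * z).
Proof.
elim/pure_ind: x y z => [|c x x' Hx Hx'|a1 b1 r1 s1 hr1 hs1] y z.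
- by rewrite mul0r !(linear_for0 (formT_linl _)).
- by rewrite mulrDl -scalerAl !formT_linl Hx Hx'.
elim/pure_ind: y z => [|c y y' Hy Hy'|a2 b2 r2 s2 hr2 hs2] z.
- by rewrite mulr0 mul0r (linear_for0 (formT_linl _)) (linear_for0 (formT_linr _)).
- by rewrite mulrDr mulrDl -scalerAr -scalerAl formT_linl formT_linr Hy Hy'.
elim/pure_ind: z => [|c z z' Hz Hz'|a3 b3 r3 s3 hr3 hs3].
- by rewrite !mulr0 !(linear_for0 (formT_linr _)).
- by rewrite mulrDr -scalerAr !formT_linr Hz Hz'.
rewrite (iota_mul hr1 hr2 hs1 hs2) (iota_mul hr2 hr3 hs2 hs3).
rewrite (linear_forZ (formT_linl _)) (linear_forZ (formT_linr _)) /=.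
rewrite (formT_pure (grading_mul gR hr1 hr2) hr3 (grading_mul gS hs1 hs2) hs3).
rewrite (formT_pure hr1 (grading_mul gR hr2 hr3) hs1 (grading_mul gS hs2 hs3)).
by rewrite formR_assoc formS_assoc t_addl t_addr; ring.
Qed.

End TwistedFormAssoc.

Theorem mainTheorem3 (k : fieldType) (A B : zmodType)
    (R S : falgType k) (VR : A -> {vspace R}) (VS : B -> {vspace S})
    (formR : R -> R -> k) (formS : S -> S -> k) (t : A -> B -> k)
    (T : falgType k) (iota : R -> S -> T) (formT : T -> T -> k) :
  grading VR -> grading VS ->
  frobenius_form formR -> frobenius_form formS ->
  bicharacter t ->
  is_tensor_product iota ->
  (* T = R (x)^t S : twisted multiplication on homogeneous pure tensors *)
  (forall a a' b b' (r r' : R) (s s' : S),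
     r \in VR a -> r' \in VR a' -> s \in VS b -> s' \in VS b' ->
     iota r s * iota r' s' = t a' b *: iota (r * r') (s * s')) ->
  (* the bilinear form on R (x)^t S *)
  bilinear_form formT ->
  (forall a a' b b' (r r' : R) (s s' : S),
     r \in VR a -> r' \in VR a' -> s \in VS b -> s' \in VS b' ->
     formT (iota r s) (iota r' s') = t a' b * formR r r' * formS s s') ->
  frobenius_form formT.
Proof.
move=> gR gS [/bilinear_form_scalar[fRl fRr] ndRl ndRr assR]
  [/bilinear_form_scalar[fSl fSr] ndSl ndSr assS] [t_neq0 t_addl t_addr].
case=> iota_linl iota_linr iota_span _ iota_mul fT formT_pure.
have [fTl fTr] := bilinear_form_scalar fT.
have iotal s : linear (iota^~ s) by move=> c r r'; apply: iota_linl.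
have iotar r : linear (iota r) by move=> c s s'; apply: iota_linr.
split=> //.
- exact: (twisted_form_left_nondegenerate gR gS t_neq0).
- apply: (twisted_form_left_nondegenerate (VR := VS) (VS := VR)
    (formR := fun s s' => formS s' s) (formS := fun r r' => formR r' r)
    (t := fun b a => t a b) (iota := fun s r => iota r s)) => //.
  + move=> x; have [rs ->] := iota_span x.
    by exists [seq (p.2, p.1) | p <- rs]; rewrite big_map.
  + move=> b b' a a' s s' r r' hs hs' hr hr' /=.
    by rewrite (formT_pure _ _ _ _ _ _ _ _ hr' hr hs' hs) mulrAC.
- exact: (twisted_form_assoc gR gS t_addl t_addr assR assS).
Qed.
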